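(* Let $\alpha$ be an expanding algebraic number, $\mathcal{D}\subset\mathbb{Z}[\alpha]$ a standard digit set for $\alpha$, and $m\in\mathbb{Z}$ with $\mathcal{D}\subset\alpha^m\mathbb{Z}[\alpha^{-1}]$. Let $x,y\in\Lambda_{\alpha,m}$ and $k\ge0$ with $x-y\in\Lambda_{\alpha,m-k}$. Then $\alpha^{-k}(T_\alpha^{-k}(x)\cap\Lambda_{\alpha,m})-x=\alpha^{-k}(T_\alpha^{-k}(y)\cap\Lambda_{\alpha,m})-y$.
   Context: $\alpha$ is an algebraic number all of whose conjugates have modulus $>1$. $\mathcal{D}$ standard: complete residue system of $\mathbb{Z}[\alpha]/\alpha\mathbb{Z}[\alpha]$. $\Lambda_{\alpha,k}=\mathbb{Z}[\alpha]\cap\alpha^{k-1}\mathbb{Z}[\alpha^{-1}]$. $T_\alpha:\mathbb{Z}[\alpha]\to\mathbb{Z}[\alpha]$, $x\mapsto\alpha^{-1}(x-d)$ with $d\in\mathcal{D}$ the unique digit such that $\alpha^{-1}(x-d)\in\mathbb{Z}[\alpha]$; $T_\alpha^{-k}(x)$ is the preimage set of $x$ under the $k$-th iterate. Sets are subsets of $\mathbb{Q}(\alpha)$, with $\alpha^{-k}S-x=\{\alpha^{-k}s-x:s\in S\}$. *)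

(* alpha is an algebraic number, realised inside algC
   (the algebraic closure of Q in C); Q(alpha) is a subfield of algC. *)
From HB Require Import structures.
From mathcomp Require Import all_boot all_order all_algebra all_field.
Set Implicit Arguments. Unset Strict Implicit. Unset Printing Implicit Defensive.
Import Order.TTheory GRing.Theory Num.Theory.
Local Open Scope ring_scope.

Definition algebraic (a : algC) : Prop :=
  exists2 p : {poly rat}, p != 0 & root (map_poly ratr p) a.

(* b is a conjugate of a: b is a root of the minimal polynomial of a, i.e.
   b is a root of every rational polynomial vanishing at a. *)
Definition conjugate (a b : algC) : Prop :=
  forall p : {poly rat}, root (map_poly ratr p) a -> root (map_poly ratr p) b.

Definition expanding (a : algC) : Prop :=
  algebraic a /\ forall b, conjugate a b -> 1 < `|b|.

Definition Zadj (a : algC) (z : algC) : Prop :=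
  exists p : {poly int}, z = (map_poly (fun n : int => n%:~R) p).[a].

Definition powZinv (a : algC) (j : int) (z : algC) : Prop :=
  exists2 w, Zadj a^-1 w & z = a ^ j * w.

(* Lambda_{a,k} = Z[a] ∩ a^{k-1} Z[a^{-1}] *)
Definition Lam (a : algC) (k : int) (z : algC) : Prop :=
  Zadj a z /\ powZinv a (k - 1) z.

(* D is a standard digit set: a complete residue system of Z[a]/aZ[a] *)
Definition standard_digits (a : algC) (D : algC -> Prop) : Prop :=
  (forall d, D d -> Zadj a d) /\
  (forall d1 d2, D d1 -> D d2 -> Zadj a ((d1 - d2) / a) -> d1 = d2) /\
  (forall x, Zadj a x -> exists2 d, D d & Zadj a ((x - d) / a)).

(* graph of T_a : x |-> a^{-1}(x - d), d the unique digit with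
   a^{-1}(x-d) in Z[a] (unique by standard_digits) *)
Definition Tstep (a : algC) (D : algC -> Prop) (x y : algC) : Prop :=
  Zadj a x /\ exists2 d, D d & (Zadj a ((x - d) / a) /\ y = (x - d) / a).

Fixpoint Titer (a : algC) (D : algC -> Prop) (k : nat) (x y : algC) : Prop :=
  match k with
  | 0 => Zadj a x /\ y = x
  | k'.+1 => exists2 z, Tstep a D x z & Titer a D k' z y
  end.

Definition Tpre (a : algC) (D : algC -> Prop) (k : nat) (x : algC) (z : algC)
  : Prop := Titer a D k z x.

Definition shifted_pre (a : algC) (D : algC -> Prop) (m : int) (k : nat)
  (x : algC) (w : algC) : Prop :=
  exists2 s, Tpre a D k x s /\ Lam a m s & w = a ^- k * s - x.

(* If [s] is mapped to [x] by [T_alpha^k] with digits [d_1, ..., d_k], then the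
   same digits map [s - alpha^k (x - y)] to [y], the digit maps being affine with
   linear part [alpha^-1].  Since [x - y] lies in [Lambda_(m-k)], the translation
   [alpha^k (x - y)] lies in [Lambda_m], so [s |-> s - alpha^k (x - y)] carries
   [T^-k(x) \cap Lambda_m] into [T^-k(y) \cap Lambda_m]; scaled by [alpha^-k] it is
   the translation by [y - x]. *)
From mathcomp Require Import all_boot all_order all_algebra all_field.
From mathcomp Require Import ring.
Import Order.TTheory GRing.Theory Num.Theory.
Set Implicit Arguments.
Local Open Scope ring_scope.

Section Zadj.

Variable a : algC.

Lemma Zadj_exp n : Zadj a (a ^+ n).
Proof. by exists 'X^n; rewrite map_polyXn hornerXn. Qed.

Lemma Zadj_opp u : Zadj a u -> Zadj a (- u).
Proof. by move=> [p ->]; exists (- p); rewrite rmorphN hornerN. Qed.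

Lemma Zadj_sub u v : Zadj a u -> Zadj a v -> Zadj a (u - v).
Proof. by move=> [p ->] [q ->]; exists (p - q); rewrite rmorphB hornerD hornerN. Qed.

Lemma Zadj_mul u v : Zadj a u -> Zadj a v -> Zadj a (u * v).
Proof. by move=> [p ->] [q ->]; exists (p * q); rewrite rmorphM hornerM. Qed.

Lemma Zadj_exp_mul n u : Zadj a u -> Zadj a (a ^+ n * u).
Proof. exact/Zadj_mul/Zadj_exp. Qed.

Lemma Zadj_translate n s x y : Zadj a s -> Zadj a x -> Zadj a y ->
  Zadj a (s - a ^+ n * (x - y)).
Proof. by move=> Hs Hx Hy; apply/Zadj_sub/Zadj_exp_mul/Zadj_sub. Qed.

End Zadj.

Lemma Lam_opp a j u : Lam a j u -> Lam a j (- u).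
Proof.
move=> [Zu [w Zw Eu]]; split; first exact: Zadj_opp.
by exists (- w); [exact: Zadj_opp | rewrite Eu mulrN].
Qed.

Lemma Lam_sub_exp_mul a m (k : nat) s z : a != 0 ->
  Lam a m s -> Lam a (m - k%:Z) z -> Lam a m (s - a ^+ k * z).
Proof.
move=> a0 [Zs [u Zu Es]] [Zz [v Zv Ez]]; split.
  exact: Zadj_sub Zs (Zadj_exp_mul k Zz).
exists (u - v); first exact: Zadj_sub.
rewrite Es Ez mulrBr mulrA -[a ^+ k]/(a ^ k%:Z) -expfzDr //.
by have -> : k%:Z + (m - k%:Z - 1) = m - 1 by ring.
Qed.

Lemma Titer_translate a D k s x y : a != 0 -> Zadj a x -> Zadj a y ->
  Titer a D k s x -> Titer a D k (s - a ^+ k * (x - y)) y.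
Proof.
move=> a0 Zx Zy; elim: k s => [|k IH] s /=.
  by move=> [_ ->]; rewrite expr0 mul1r opprB addrC subrK.
move=> [z [Zs [d Dd [Zsd Ez]]] Tz]; subst z.
exists ((s - d) / a - a ^+ k * (x - y)); last exact: IH.
split; first exact: Zadj_translate.
exists d => //.
have -> : (s - a ^+ k.+1 * (x - y) - d) / a = (s - d) / a - a ^+ k * (x - y).
  by rewrite exprS; field.
by split; first exact: Zadj_translate.
Qed.

Lemma shifted_pre_sub a D m k x y w : a != 0 ->
  Lam a m x -> Lam a m y -> Lam a (m - k%:Z) (x - y) ->
  shifted_pre a D m k x w -> shifted_pre a D m k y w.
Proof.
move=> a0 [Zx _] [Zy _] Lxy [s [Ts Ls] ->].
exists (s - a ^+ k * (x - y)).
  by split; [exact: Titer_translate | exact: Lam_sub_exp_mul].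
by rewrite mulrBr mulrA mulVf ?expf_neq0 // mul1r; ring.
Qed.

Lemma expanding_neq0 a : expanding a -> a != 0.
Proof.
move=> [_ conj_gt1]; apply: contraTneq (conj_gt1 a (fun p => id)) => ->.
by rewrite normr0 ltr10.
Qed.

Theorem lemma6p12 (alpha : algC) (D : algC -> Prop) (m : int)
  (x y : algC) (k : nat) :
  expanding alpha ->
  standard_digits alpha D ->
  (forall d, D d -> powZinv alpha m d) ->
  Lam alpha m x -> Lam alpha m y ->
  Lam alpha (m - k%:Z) (x - y) ->
  forall w, shifted_pre alpha D m k x w <-> shifted_pre alpha D m k y w.
Proof.
move=> /expanding_neq0 a0 _ _ Lx Ly Lxy w.
split; apply: shifted_pre_sub => //.
by rewrite -[y - x]opprB; exact: Lam_opp Lxy.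
Qed.
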